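(* Suppose the description of $K$ contains a ball constraint, i.e. $g_m(x)=R^2-\sum_{i=1}^n x_i^2$ for some real $R$. Then for every integer $d\ge d_{\min}$, every feasible point $y=(y_\alpha)_{|\alpha|\le 2d}$ of $P_d$ satisfies $$\sqrt{\textstyle\sum_{|\alpha|\le 2d} y_\alpha^2}\;\le\;\sqrt{\binom{n+d}{n}}\;\sum_{k=0}^{d}R^{2k},$$ i.e. the feasible set of $P_d$ is contained in the Euclidean ball of that radius centered at the origin.
   Context: Polynomial optimization problem: minimize $f(x)=\sum_\alpha f_\alpha x^\alpha$ over $x\in\mathbb R^n$ subject to $g_i(x)=\sum_\alpha g_{i,\alpha}x^\alpha\ge 0$, $i=1,\dots,m$, with $f,g_i$ real polynomials; $x^\alpha=x_1^{\alpha_1}\cdots x_n^{\alpha_n}$, $|\alpha|=\sum_i\alpha_i$; $K=\{x: g_i(x)\ge0,\ i=1,\dots,m\}$. Set $g_0:=1$ and let $d_i$ be the smallest integer $\ge \deg(g_i)/2$, $i=0,\dots,m$; $d_{\min}:=\max_{i}d_i$ (and assume $\deg f\le 2d$). For $y=(y_\alpha)_{|\alpha|\le 2d}$ the localizing matrix is $M_{d-d_i}(g_iy):=\big(\sum_\gamma g_{i,\gamma}y_{\alpha+\beta+\gamma}\big)_{|\alpha|,|\beta|\le d-d_i}$, and $M_d(y):=M_d(g_0y)$. The primal problem $P_d$ is: $\inf_y \sum_\alpha f_\alpha y_\alpha$ subject to $y_0=1$ and $M_{d-d_i}(g_iy)\succeq 0$ for $i=0,1,\dots,m$ (real symmetric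 positive semidefiniteness). *)

From HB Require Import structures.
From mathcomp Require Import all_boot all_order all_algebra.
Set Implicit Arguments. Unset Strict Implicit. Unset Printing Implicit Defensive.
Import Order.TTheory GRing.Theory Num.Theory.
Local Open Scope ring_scope.

Definition expo (n : nat) := {ffun 'I_n -> nat}.
Definition expo0 n : expo n := [ffun => 0%N].
Definition expo_add n (a b : expo n) : expo n := [ffun i => (a i + b i)%N].
Definition expo_deg n (a : expo n) : nat := (\sum_(i < n) a i)%N.

Definition mono (n k : nat) :=
  {f : {ffun 'I_n -> 'I_k.+1} | (\sum_(i < n) (f i : nat) <= k)%N}.
Definition mono_exp n k (a : mono n k) : expo n := [ffun i => (val a i : nat)].

Definition mpoly (R : Type) (n : nat) := seq (R * expo n).
Definition mcoef (R : nzRingType) n (g : mpoly R n) (c : expo n) : R :=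
  \sum_(t <- g | t.2 == c) t.1.
Definition msupp (R : nzRingType) n (g : mpoly R n) : seq (expo n) :=
  [seq c <- undup [seq t.2 | t <- g] | mcoef g c != 0].
(* total degree (0 for the zero polynomial) *)
Definition mdeg (R : nzRingType) n (g : mpoly R n) : nat :=
  (\max_(c <- msupp g) expo_deg c)%N.
Definition hdeg (R : nzRingType) n (g : mpoly R n) : nat := uphalf (mdeg g).

(* the ball polynomial  r^2 - sum_i x_i^2 *)
Definition unit2 n (i : 'I_n) : expo n := [ffun j => if j == i then 2%N else 0%N].
Definition ball_poly (R : nzRingType) n (r : R) : mpoly R n :=
  (r ^+ 2, expo0 n) :: [seq (-1, unit2 i) | i <- enum 'I_n].

Definition psd (R : numDomainType) (T : finType) (M : T -> T -> R) : Prop :=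
  (forall a b, M a b = M b a) /\
  (forall v : T -> R, 0 <= \sum_(a : T) \sum_(b : T) v a * M a b * v b).

Definition loc_mx (R : nzRingType) n (k : nat) (g : mpoly R n) (y : expo n -> R)
  : mono n k -> mono n k -> R :=
  fun a b => \sum_(c <- msupp g)
      mcoef g c * y (expo_add (expo_add (mono_exp a) (mono_exp b)) c).
Definition mom_mx (R : nzRingType) n (k : nat) (y : expo n -> R)
  : mono n k -> mono n k -> R :=
  fun a b => y (expo_add (mono_exp a) (mono_exp b)).

(* d_min = max_{i=0..m} d_i, d_0 = 0 *)
Definition dmin (R : nzRingType) n m (gs : 'I_m -> mpoly R n) : nat :=
  (\max_(i < m) hdeg (gs i))%N.

(* feasibility for P_d (only the values y_alpha, |alpha| <= 2d, are involved) *)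
Definition feasible (R : numDomainType) n m (gs : 'I_m -> mpoly R n) (d : nat)
  (y : expo n -> R) : Prop :=
  y (expo0 n) = 1 /\ psd (@mom_mx R n d y) /\
  forall i : 'I_m, psd (@loc_mx R n (d - hdeg (gs i)) (gs i) y).

(* The diagonal of the localizing matrix of the ball constraint gives
   sum_i y_(2a + 2e_i) <= R^2 y_(2a) for |a| < d, and the diagonal of M_d(y) is
   nonnegative.  Hence the partial traces T_k = sum_(|a| <= k) y_(2a) satisfy
   T_0 = y_0 = 1 and T_(k+1) <= 1 + R^2 T_k, so tr M_d(y) <= sum_(k <= d) R^(2k).
   Every y_a with |a| <= 2d is an entry of M_d(y), and M_ab^2 <= M_aa M_bb for
   a PSD matrix, so sum_a y_a^2 <= sum_(a,b) M_ab^2 <= (tr M_d(y))^2: the bound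
   holds even without the factor sqrt(binom(n+d, n)) >= 1. *)

From mathcomp Require Import all_boot all_order all_algebra.
From mathcomp Require Import zify ring lra.
Set Implicit Arguments. Unset Strict Implicit. Unset Printing Implicit Defensive.
Import Order.TTheory GRing.Theory Num.Theory.
Local Open Scope ring_scope.

Section Coefficients.
Variables (R : nzRingType) (n : nat).
Implicit Types (g : mpoly R n) (c : expo n).

Lemma mcoef_notin g c : c \notin [seq t.2 | t <- g] -> mcoef g c = 0.
Proof.
move=> cNg; rewrite /mcoef big_seq_cond big1 // => t /andP[tg /eqP tc].
by case/negP: cNg; rewrite -tc; apply/mapP; exists t.
Qed.

Lemma mem_msupp g c : (c \in msupp g) = (mcoef g c != 0).
Proof.
rewrite /msupp mem_filter mem_undup andbC.
by case: (boolP (c \in _)) => //= /mcoef_notin ->; rewrite eqxx.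
Qed.

Lemma msupp_uniq g : uniq (msupp g).
Proof. by rewrite filter_uniq // undup_uniq. Qed.

Lemma perm_msupp g g' :
  (forall c, mcoef g c = mcoef g' c) -> perm_eq (msupp g) (msupp g').
Proof.
move=> eq_g; apply: uniq_perm; rewrite ?msupp_uniq // => c.
by rewrite !mem_msupp eq_g.
Qed.

Lemma eq_mdeg g g' : (forall c, mcoef g c = mcoef g' c) -> mdeg g = mdeg g'.
Proof. by move=> eq_g; apply: perm_big; apply: perm_msupp. Qed.

Lemma sum_msupp g (h : expo n -> R) :
  \sum_(c <- msupp g) mcoef g c * h c = \sum_(t <- g) t.1 * h t.2.
Proof.
rewrite /msupp big_filter big_mkcond /=.
rewrite (eq_bigr (fun c => mcoef g c * h c)); last first.
  by move=> c _; case: ifP => // /negbFE/eqP ->; rewrite mul0r.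
rewrite (eq_bigr (fun c => \sum_(t <- g | t.2 == c) t.1 * h t.2)); last first.
  by move=> c _; rewrite /mcoef mulr_suml; apply: eq_bigr => t /eqP ->.
rewrite (exchange_big_dep xpredT) //=; apply: eq_big_seq => t tg.
rewrite (eq_bigl (fun c => c == t.2)); last by move=> c; rewrite eq_sym.
rewrite -big_filter filter_pred1_uniq ?undup_uniq ?big_seq1 //.
by rewrite mem_undup; apply/mapP; exists t.
Qed.

Lemma eq_sum_msupp g g' (h : expo n -> R) :
  (forall c, mcoef g c = mcoef g' c) ->
  \sum_(c <- msupp g) mcoef g c * h c = \sum_(c <- msupp g') mcoef g' c * h c.
Proof.
move=> eq_g; rewrite (perm_big _ (perm_msupp eq_g)).
by apply: eq_bigr => c _; rewrite eq_g.
Qed.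

End Coefficients.

Section Exponents.
Variable n : nat.
Implicit Types (a e : expo n) (i : 'I_n).

Definition expo_unit i : expo n := [ffun j => nat_of_bool (j == i)].
Definition expo_sub e a : expo n := [ffun i => e i - a i]%N.

Lemma leq_expo_deg e i : (e i <= expo_deg e)%N.
Proof. by rewrite /expo_deg (bigD1 i) //= leq_addr. Qed.

Lemma expo_deg_add a e : expo_deg (expo_add a e) = (expo_deg a + expo_deg e)%N.
Proof. by rewrite /expo_deg -big_split; apply: eq_bigr => i _; rewrite ffunE. Qed.

Lemma expo_add0 e : expo_add e (expo0 n) = e.
Proof. by apply/ffunP => i; rewrite !ffunE addn0. Qed.

Lemma expo_deg0 : expo_deg (expo0 n) = 0%N.
Proof. by rewrite /expo_deg big1 // => i _; rewrite ffunE. Qed.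

Lemma expo_deg_eq0 e : expo_deg e = 0%N -> e = expo0 n.
Proof.
move=> e0; apply/ffunP => i; rewrite /expo0 ffunE.
by apply/eqP; rewrite -leqn0 -e0 leq_expo_deg.
Qed.

Lemma expo_deg_unit i : expo_deg (expo_unit i) = 1%N.
Proof.
rewrite /expo_deg (bigD1 i) //= ffunE eqxx big1 // => j /negbTE ji.
by rewrite ffunE ji.
Qed.

Lemma expo_deg_unit2 i : expo_deg (unit2 i) = 2%N.
Proof.
rewrite /expo_deg (bigD1 i) //= ffunE eqxx big1 // => j /negbTE ji.
by rewrite ffunE ji.
Qed.

Lemma expo_add_unit2 e i :
  expo_add (expo_add e e) (unit2 i) =
  expo_add (expo_add e (expo_unit i)) (expo_add e (expo_unit i)).
Proof. by apply/ffunP => j; rewrite !ffunE; case: (j == i) => /=; lia. Qed.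

Lemma expo_subK a e : (forall i, a i <= e i)%N -> expo_add a (expo_sub e a) = e.
Proof. by move=> le_ae; apply/ffunP => i; rewrite !ffunE subnKC. Qed.

Lemma expo_deg_sub a e : (forall i, a i <= e i)%N ->
  expo_deg (expo_sub e a) = (expo_deg e - expo_deg a)%N.
Proof. by move=> le_ae; rewrite -[in RHS](expo_subK le_ae) expo_deg_add addKn. Qed.

Lemma expo_deg_gt0 e : (0 < expo_deg e)%N -> exists i, (0 < e i)%N.
Proof.
move=> e_gt0; apply/existsP; apply: contraTT e_gt0.
rewrite negb_exists => /forallP e0; rewrite -leqNgt /expo_deg big1 // => i _.
by have := e0 i; lia.
Qed.

Lemma expo_sub_unitK e i : (0 < e i)%N ->
  expo_add (expo_sub e (expo_unit i)) (expo_unit i) = e.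
Proof. by move=> ei; apply/ffunP => j; rewrite !ffunE; case: eqP => [->|] /=; lia. Qed.

Lemma expo_deg_sub_unit e i :
  (0 < e i)%N -> (expo_deg (expo_sub e (expo_unit i))).+1 = expo_deg e.
Proof.
by move=> ei; rewrite -[in RHS](expo_sub_unitK ei) expo_deg_add expo_deg_unit addn1.
Qed.

Lemma expo_lower e k : (k <= expo_deg e)%N ->
  exists2 a : expo n, (forall i, a i <= e i)%N & expo_deg a = k.
Proof.
elim: k => [|k IHk] le_ke.
  by exists (expo0 n) => [i|]; rewrite ?ffunE ?expo_deg0.
have [a le_ae deg_a] := IHk (ltnW le_ke).
have [i lt_ai] : exists i, (a i < e i)%N.
  apply/existsP; apply: contraTT le_ke; rewrite negb_exists => /forallP ge_ae.
  have : (expo_deg e <= expo_deg a)%N by apply: leq_sum => i _; have := ge_ae i; lia.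
  lia.
exists (expo_add a (expo_unit i)) => [j|];
  last by rewrite expo_deg_add expo_deg_unit deg_a addn1.
by rewrite !ffunE; case: eqP => [->|] /=; have := le_ae j; lia.
Qed.

Lemma expo_split e k l : (expo_deg e <= k + l)%N ->
  exists p : expo n * expo n,
    [&& expo_add p.1 p.2 == e, expo_deg p.1 <= k & expo_deg p.2 <= l]%N.
Proof.
move=> deg_e; have [a le_ae deg_a] := expo_lower (geq_minl (expo_deg e) k).
exists (a, expo_sub e a); rewrite /= expo_subK // expo_deg_sub // deg_a eqxx /=.
by rewrite geq_minr /=; lia.
Qed.

Section Monomials.
Variable k : nat.
Implicit Type u : mono n k.

Lemma mono_deg u : (expo_deg (mono_exp u) <= k)%N.
Proof.
rewrite /expo_deg (eq_bigr (fun i => (val u i : nat))); first exact: (valP u).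
by move=> i _; rewrite ffunE.
Qed.

Lemma mono_exp_inj : injective (@mono_exp n k).
Proof.
move=> u v /ffunP eq_uv; apply: val_inj; apply/ffunP => i; apply: val_inj.
by have := eq_uv i; rewrite !ffunE.
Qed.

Lemma mono0_subproof :
  (\sum_(i < n) ((([ffun => ord0] : {ffun 'I_n -> 'I_k.+1}) i : nat)) <= k)%N.
Proof. by rewrite big1 // => i _; rewrite ffunE. Qed.

(* The monomial of exponent e; junk value when |e| > k. *)
Definition mono_of e : mono n k :=
  insubd (exist _ [ffun => ord0] mono0_subproof)
         ([ffun i => inord (e i)] : {ffun 'I_n -> 'I_k.+1}).

Lemma mono_ofK e : (expo_deg e <= k)%N -> mono_exp (mono_of e) = e.
Proof.
move=> deg_e; have inordE i : ((inord (e i) : 'I_k.+1) : nat) = e i.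
  by rewrite inordK // ltnS (leq_trans (leq_expo_deg e i)).
rewrite /mono_of /mono_exp insubdK; first by apply/ffunP => i; rewrite !ffunE inordE.
by rewrite unfold_in /= (eq_bigr (fun i => e i)) // => i _; rewrite ffunE inordE.
Qed.

End Monomials.
End Exponents.

Section Quadratic_forms.
Variables (R : realFieldType) (T : finType).
Implicit Type M : T -> T -> R.

Definition vec2 (x y : T) (s t : R) (z : T) : R := (z == x)%:R * s + (z == y)%:R * t.

Lemma sum_mul_vec2 (f : T -> R) x y s t :
  \sum_z f z * vec2 x y s t z = f x * s + f y * t.
Proof.
rewrite /vec2 (eq_bigr (fun z => f z * ((z == x)%:R * s) + f z * ((z == y)%:R * t)));
  last by move=> z _; rewrite mulrDr.
rewrite big_split /= (bigD1 x) // [X in _ + X](bigD1 y) //= !eqxx !mul1r.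
by rewrite !big1 ?addr0 // => z /negbTE ->; rewrite mul0r mulr0.
Qed.

Lemma qform_vec2 M x y s t :
  \sum_a \sum_b vec2 x y s t a * M a b * vec2 x y s t b
  = s * (s * M x x + t * M x y) + t * (s * M y x + t * M y y).
Proof.
rewrite (eq_bigr (fun a => (\sum_b M a b * vec2 x y s t b) * vec2 x y s t a)); last first.
  by move=> a _; rewrite mulr_suml; apply: eq_bigr => b _; ring.
under eq_bigr => a _ do rewrite sum_mul_vec2.
by rewrite sum_mul_vec2; ring.
Qed.

Lemma psd_diag_ge0 M x : psd M -> 0 <= M x x.
Proof. by case=> _ /(_ (vec2 x x 1 0)); rewrite qform_vec2; nra. Qed.

Lemma psd_entry_sqr_le M x y : psd M -> M x y ^+ 2 <= M x x * M y y.
Proof.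
move=> psdM; have Mxx := psd_diag_ge0 x psdM; have Myy := psd_diag_ge0 y psdM.
case: psdM => symM qM.
have {}qM s t : 0 <= s * (s * M x x + t * M x y) + t * (s * M x y + t * M y y).
  by have := qM (vec2 x y s t); rewrite qform_vec2 symM.
have [Mxx0|Mxx_neq0] := eqVneq (M x x) 0.
  by have := qM (M y y + 1) (- M x y); rewrite Mxx0; nra.
have Mxx_gt0 : 0 < M x x by rewrite lt_def Mxx_neq0 Mxx.
by have := qM (M x y) (- M x x); nra.
Qed.

Lemma psd_sum_sqr_le M : psd M -> \sum_a \sum_b M a b ^+ 2 <= (\sum_a M a a) ^+ 2.
Proof.
move=> psdM; rewrite expr2 big_distrlr /=.
by apply: ler_sum => a _; apply: ler_sum => b _; apply: psd_entry_sqr_le.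
Qed.

End Quadratic_forms.

Lemma ler_sum_inj (R : numDomainType) (I J : finType) (P : pred I) (Q : pred J)
    (f : I -> J) (F : I -> R) (G : J -> R) :
  {in P &, injective f} -> (forall i, P i -> Q (f i)) ->
  (forall i, P i -> F i = G (f i)) -> (forall j, Q j -> 0 <= G j) ->
  \sum_(i | P i) F i <= \sum_(j | Q j) G j.
Proof.
move=> f_inj PQ FG G_ge0; rewrite (eq_bigr (G \o f)) //.
have -> : \sum_(i | P i) G (f i) = \sum_(j in f @: [set i | P i]) G j.
  rewrite big_imset /=; first by apply: eq_bigl => i; rewrite inE.
  by move=> i1 i2; rewrite !inE; apply: f_inj.
rewrite [leRHS](bigID (mem (f @: [set i | P i]))) /= -[leLHS]addr0.
apply: lerD; last by apply: sumr_ge0 => j /andP[/G_ge0].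
rewrite [leRHS](eq_bigl (mem (f @: [set i | P i]))) // => j /=.
case: (boolP (j \in _)) => [/imsetP[i]|]; rewrite ?andbF //.
by rewrite inE => Pi -> /=; rewrite PQ.
Qed.

Lemma sum_shell_le (R : numDomainType) n d j (F : expo n -> R) :
  (j < d)%N -> (forall e, (expo_deg e <= d)%N -> 0 <= F e) ->
  \sum_(u : mono n d | (0 < expo_deg (mono_exp u) <= j.+1)%N) F (mono_exp u)
  <= \sum_(u : mono n d | (expo_deg (mono_exp u) <= j)%N)
       \sum_i F (expo_add (mono_exp u) (expo_unit i)).
Proof.
move=> lt_jd F_ge0.
have [i0 _|no_index] := pickP (fun _ : 'I_n => true); last first.
  rewrite big1 => [|u /andP[/expo_deg_gt0[i _] _]]; last by have := no_index i.
  by apply: sumr_ge0 => u _; apply: sumr_ge0 => i; have := no_index i.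
(* Removing one unit at a positive coordinate injects the shell into pairs (u', i). *)
pose pivot (e : expo n) := odflt i0 [pick i | 0 < e i]%N.
have pivot_gt0 e : (0 < expo_deg e)%N -> (0 < e (pivot e))%N.
  by case/expo_deg_gt0 => i ei; rewrite /pivot; case: pickP => [//|/(_ i)]; rewrite ei.
pose lower (u : mono n d) := expo_sub (mono_exp u) (expo_unit (pivot (mono_exp u))).
have lowerP u : (0 < expo_deg (mono_exp u) <= j.+1)%N ->
    [/\ (expo_deg (lower u) <= j)%N, mono_exp (mono_of d (lower u)) = lower u
      & expo_add (lower u) (expo_unit (pivot (mono_exp u))) = mono_exp u].
  case/andP=> /pivot_gt0 u_pivot deg_u.
  have deg_lower : (expo_deg (lower u) <= j)%N by rewrite -ltnS expo_deg_sub_unit.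
  split; [by [] | apply: mono_ofK | exact: expo_sub_unitK].
  by rewrite (leq_trans deg_lower) // ltnW.
rewrite (pair_big_dep _ (fun _ _ => true)) /=.
apply: (ler_sum_inj (f := fun u => (mono_of d (lower u), pivot (mono_exp u)))
  (G := fun p => F (expo_add (mono_exp p.1) (expo_unit p.2)))).
- move=> u v /lowerP[_ lowerKu addKu] /lowerP[_ lowerKv addKv] [lower_uv pivot_uv].
  apply: mono_exp_inj; rewrite -addKu -addKv pivot_uv -lowerKu -lowerKv.
  by rewrite lower_uv.
- by move=> u /lowerP[deg_lower lowerK _] /=; rewrite lowerK deg_lower.
- by move=> u /lowerP[_ lowerK addK] /=; rewrite lowerK addK.
- move=> [u i] /= /andP[deg_u _]; apply: F_ge0.
  by rewrite expo_deg_add expo_deg_unit addn1 (leq_ltn_trans deg_u).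
Qed.

Lemma sum_sqr_le_mom_mx (R : realDomainType) n d (y : expo n -> R) :
  \sum_(u : mono n (2 * d)) y (mono_exp u) ^+ 2
  <= \sum_u \sum_v @mom_mx R n d y u v ^+ 2.
Proof.
have deg_u (u : mono n (2 * d)) : (expo_deg (mono_exp u) <= d + d)%N.
  by rewrite addnn -mul2n mono_deg.
pose halves u := xchoose (expo_split (deg_u u)).
have halvesP u : [/\ expo_add (halves u).1 (halves u).2 = mono_exp u,
    mono_exp (mono_of d (halves u).1) = (halves u).1
  & mono_exp (mono_of d (halves u).2) = (halves u).2].
  have /and3P[/eqP addK deg1 deg2] := xchooseP (expo_split (deg_u u)).
  by split; [exact: addK | exact: mono_ofK | exact: mono_ofK].
rewrite pair_bigA /=.
apply: (ler_sum_inj (f := fun u => (mono_of d (halves u).1, mono_of d (halves u).2))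
  (G := fun p => @mom_mx R n d y p.1 p.2 ^+ 2)) => //.
- move=> u v _ _ [half1_uv half2_uv]; apply: mono_exp_inj.
  have [addKu half1Ku half2Ku] := halvesP u; have [addKv half1Kv half2Kv] := halvesP v.
  by rewrite -addKu -addKv -half1Ku -half2Ku -half1Kv -half2Kv half1_uv half2_uv.
- move=> u _ /=; have [addK half1K half2K] := halvesP u.
  by rewrite /mom_mx half1K half2K addK.
- by move=> p _; apply: sqr_ge0.
Qed.

Section Ball_constraint.
Variables (R : nzRingType) (n : nat) (r : R) (g : mpoly R n).
Hypothesis g_ball : forall c, mcoef g c = mcoef (ball_poly n r) c.

Lemma mdeg_ball_poly : (mdeg (ball_poly n r) <= 2)%N.
Proof.
apply/bigmax_leqP_seq => c; rewrite mem_msupp => c_supp _.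
have : c \in [seq t.2 | t <- ball_poly n r].
  by apply: contraNT c_supp => /mcoef_notin ->; rewrite eqxx.
rewrite /ball_poly /= -map_comp inE => /orP[/eqP ->|/mapP[i _ ->]] /=.
  by rewrite expo_deg0.
by rewrite expo_deg_unit2.
Qed.

Lemma hdeg_ball : (hdeg g <= 1)%N.
Proof. by rewrite /hdeg (eq_mdeg g_ball); case: mdeg mdeg_ball_poly => [|[|[|]]]. Qed.

Lemma loc_mx_ball k (y : expo n -> R) (u v : mono n k) :
  @loc_mx R n k g y u v = r ^+ 2 * y (expo_add (mono_exp u) (mono_exp v))
    - \sum_i y (expo_add (expo_add (mono_exp u) (mono_exp v)) (unit2 i)).
Proof.
rewrite /loc_mx (eq_sum_msupp _ g_ball) sum_msupp big_cons big_map big_enum /=.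
by rewrite expo_add0 -sumrN; congr (_ + _); apply: eq_bigr => i _; rewrite mulN1r.
Qed.

End Ball_constraint.

Section Moment_bound.
Variables (R : realFieldType) (n d k : nat) (r : R) (g : mpoly R n) (y : expo n -> R).
Hypotheses (y0 : y (expo0 n) = 1) (mom_psd : psd (@mom_mx R n d y)).
Hypotheses (g_ball : forall c, mcoef g c = mcoef (ball_poly n r) c)
  (loc_psd : psd (@loc_mx R n k g y)) (le_dk : (d <= k.+1)%N).

Local Notation y2 e := (y (expo_add e e)).

Lemma mom_diag_ge0 e : (expo_deg e <= d)%N -> 0 <= y2 e.
Proof.
by move=> deg_e; have := psd_diag_ge0 (mono_of d e) mom_psd; rewrite /mom_mx mono_ofK.
Qed.

Lemma ball_diag_le e : (expo_deg e < d)%N ->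
  \sum_i y (expo_add (expo_add e e) (unit2 i)) <= r ^+ 2 * y2 e.
Proof.
move=> deg_e; have := psd_diag_ge0 (mono_of k e) loc_psd.
by rewrite (loc_mx_ball g_ball) mono_ofK ?subr_ge0 // -ltnS (leq_trans deg_e).
Qed.

Definition partial_trace (j : nat) : R :=
  \sum_(u : mono n d | (expo_deg (mono_exp u) <= j)%N) y2 (mono_exp u).

Lemma partial_trace0 : partial_trace 0 = 1.
Proof.
have deg0 : (expo_deg (expo0 n) <= d)%N by rewrite expo_deg0.
rewrite /partial_trace (bigD1 (mono_of d (expo0 n))) /=;
  last by rewrite mono_ofK // expo_deg0.
rewrite mono_ofK // expo_add0 y0 big1 ?addr0 // => u /andP[deg_u].
apply: contraNeq => _; apply/eqP/mono_exp_inj; rewrite mono_ofK //.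
by apply: expo_deg_eq0; apply/eqP; rewrite -leqn0.
Qed.

Lemma partial_traceS j : (j < d)%N -> partial_trace j.+1 <= 1 + r ^+ 2 * partial_trace j.
Proof.
move=> lt_jd; rewrite /partial_trace.
rewrite (bigID (fun u : mono n d => (expo_deg (mono_exp u) <= 0)%N)) /=.
rewrite (eq_bigl (fun u : mono n d => (expo_deg (mono_exp u) <= 0)%N));
  rewrite -/(partial_trace 0);
  last by move=> u; rewrite andb_idl // => /leq_trans->.
rewrite partial_trace0 lerD2l.
rewrite (eq_bigl (fun u : mono n d => (0 < expo_deg (mono_exp u) <= j.+1)%N));
  last by move=> u; rewrite andbC ltnNge.
apply: le_trans (sum_shell_le (F := fun e => y2 e) lt_jd mom_diag_ge0) _.
rewrite mulr_sumr; apply: ler_sum => u deg_u.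
under eq_bigr => i _ do rewrite -expo_add_unit2.
by apply: ball_diag_le; rewrite (leq_ltn_trans deg_u).
Qed.

Lemma partial_trace_le j : (j <= d)%N -> partial_trace j <= \sum_(i < j.+1) r ^+ (2 * i).
Proof.
elim: j => [|j IHj] le_jd; first by rewrite partial_trace0 big_ord1 muln0 expr0.
apply: le_trans (partial_traceS le_jd) _; rewrite big_ord_recl muln0 expr0 lerD2l.
apply: le_trans (ler_wpM2l (sqr_ge0 r) (IHj (ltnW le_jd))) _.
by rewrite mulr_sumr; apply: ler_sum => i _; rewrite -exprD /bump /= mulnDr addnC.
Qed.

Lemma sum_sqr_moments_le :
  \sum_(u : mono n (2 * d)) y (mono_exp u) ^+ 2 <= (\sum_(i < d.+1) r ^+ (2 * i)) ^+ 2.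
Proof.
have trace_ge0 : 0 <= \sum_u @mom_mx R n d y u u.
  by apply: sumr_ge0 => u _; apply: psd_diag_ge0.
have trace_le : \sum_u @mom_mx R n d y u u <= \sum_(i < d.+1) r ^+ (2 * i).
  have -> : \sum_u @mom_mx R n d y u u = partial_trace d.
    by apply: eq_bigl => u; rewrite mono_deg.
  exact: partial_trace_le.
apply: le_trans (@sum_sqr_le_mom_mx R n d y) _.
apply: le_trans (psd_sum_sqr_le mom_psd) _.
by rewrite !expr2 ler_pM.
Qed.

End Moment_bound.

Theorem lemma3 (R : rcfType) (n m : nat) (gs : 'I_m -> mpoly R n) (j : 'I_m)
  (r : R) (hball : forall c, mcoef (gs j) c = mcoef (ball_poly n r) c)
  (d : nat) (hd : (dmin gs <= d)%N) (y : expo n -> R)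
  (hy : feasible gs d y) :
  Num.sqrt (\sum_(a : mono n (2 * d)) y (mono_exp a) ^+ 2)
  <= Num.sqrt ('C(n + d, n))%:R * \sum_(k < d.+1) r ^+ (2 * k).
Proof.
case: hy => y0 [mom_psd loc_psd].
have le_dk : (d <= (d - hdeg (gs j)).+1)%N by have := hdeg_ball hball; lia.
have sum_le := sum_sqr_moments_le y0 mom_psd hball (loc_psd j) le_dk.
have S_ge0 : 0 <= \sum_(k < d.+1) r ^+ (2 * k).
  by apply: sumr_ge0 => k _; rewrite exprM exprn_ge0 ?sqr_ge0.
apply: le_trans (ler_wsqrtr sum_le) _; rewrite sqrtr_sqr ger0_norm //.
apply: ler_peMl => //; rewrite -[leLHS]sqrtr1 ler_wsqrtr //.
by rewrite ler1n bin_gt0 leq_addr.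
Qed.
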